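(* Let $T=(A,B,C)$ be a nondegenerate, counterclockwise triangle all of whose angles are less than $120^\circ$, so that its flank triangles $F_a,F_b,F_c$ are nondegenerate and counterclockwise. Then the second isodynamic points of $F_a$, $F_b$, $F_c$ all coincide with the second isodynamic point $X_{16}$ of $T$.
   Context: Identify the Euclidean plane with $\mathbb{C}$ and put $\rho=e^{2\pi i/3}$. Let $T=(A,B,C)$ be a nondegenerate triangle whose vertices are listed counterclockwise. On each side of $T$ erect outwardly a regular hexagon, i.e. the regular hexagon having that side as an edge and lying on the opposite side of that side's line from the third vertex. The flank triangles of $T$ are: $F_a$ with vertices $A,\ A+\rho(C-A),\ A+\rho^{-1}(B-A)$; $F_b$ with vertices $B,\ B+\rho(A-B),\ B+\rho^{-1}(C-B)$; $F_c$ with vertices $C,\ C+\rho(B-C),\ C+\rho^{-1}(A-C)$. For example, $A+\rho(C-A)$ and $A+\rho^{-1}(B-A)$ are the vertices adjacent to $A$, other than $C$ resp. $B$, of the hexagons erected on $AC$ resp. $AB$. The angle of $F_a$ at $A$ equals $120^\circ-\angle A$, and similarly for $F_b$ and $F_c$. For a nondegenerate triangle with vertices $V_1,V_2,V_3$, let $\ell_i$ be the length of the side opposite $V_i$ and $\theta_i$ the angle at $V_i$. The second isodynamic point $X_{16}$ is the point with homogeneous barycentric coordinates $(\ell_1\sin(\theta_1-\pi/3):\ell_2\sin(\theta_2-\pi/3):\ell_3\sin(\theta_3-\pi/3))$. *)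

From Stdlib Require Import Reals.
From Coquelicot Require Import Coquelicot.
Open Scope R_scope.

Definition rho : C := (cos (2 * PI / 3), sin (2 * PI / 3)).

Definition dotC (u v : C) : R := fst u * fst v + snd u * snd v.
Definition crossC (u v : C) : R := fst u * snd v - snd u * fst v.

Definition ccw (A B C0 : C) : Prop := crossC (Cminus B A) (Cminus C0 A) > 0.

Definition angle_at (V P Q : C) : R :=
  acos (dotC (Cminus P V) (Cminus Q V) / (Cmod (Cminus P V) * Cmod (Cminus Q V))).

Definition flank_a (A B C0 : C) : C * C * C :=
  (A, Cplus A (Cmult rho (Cminus C0 A)), Cplus A (Cmult (Cinv rho) (Cminus B A))).
Definition flank_b (A B C0 : C) : C * C * C :=
  (B, Cplus B (Cmult rho (Cminus A B)), Cplus B (Cmult (Cinv rho) (Cminus C0 B))).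
Definition flank_c (A B C0 : C) : C * C * C :=
  (C0, Cplus C0 (Cmult rho (Cminus B C0)), Cplus C0 (Cmult (Cinv rho) (Cminus A C0))).

(* Homogeneous Cartesian coordinates (sum w_i V_i , sum w_i) of the point with
   homogeneous barycentric coordinates (w1:w2:w3) w.r.t. (V1,V2,V3).
   The second component being 0 means a point at infinity. *)
Definition bary_hom (V1 V2 V3 : C) (w1 w2 w3 : R) : C * R :=
  (Cplus (Cplus (Cmult (RtoC w1) V1) (Cmult (RtoC w2) V2)) (Cmult (RtoC w3) V3),
   w1 + w2 + w3).

Definition same_point (p q : C * R) : Prop :=
  exists k : R, k <> 0 /\ fst p = Cmult (RtoC k) (fst q) /\ snd p = k * snd q.

Definition X16_hom (V1 V2 V3 : C) : C * R :=
  let l1 := Cmod (Cminus V3 V2) in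
  let l2 := Cmod (Cminus V1 V3) in
  let l3 := Cmod (Cminus V2 V1) in
  let t1 := angle_at V1 V2 V3 in
  let t2 := angle_at V2 V3 V1 in
  let t3 := angle_at V3 V1 V2 in
  bary_hom V1 V2 V3 (l1 * sin (t1 - PI / 3)) (l2 * sin (t2 - PI / 3))
                    (l3 * sin (t3 - PI / 3)).

Definition X16_tri (T : C * C * C) : C * R :=
  let '(V1, V2, V3) := T in X16_hom V1 V2 V3.

From Stdlib Require Import Reals Lra Psatz.
From Coquelicot Require Import Coquelicot.
Open Scope R_scope.

(* Writing sin t = 2 Delta / (m n) and cos t = <u, v> / (m n) at a vertex with
   outgoing sides u, v of lengths m, n,
   the barycentrics of X16 become, up to the common factor 1 / (2 l1 l2 l3),
   the polynomial weights  l1^2 (2 Delta - sqrt 3 <V2 - V1, V3 - V1>)  and their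
   rotations.  The flank triangle at A has vertices A, A + rho (C - A),
   A + rho^-1 (B - A), so after translating A to the origin both mass points are
   polynomials in the coordinates and in sqrt 3, and their proportionality (with
   the ratio of the two areas as factor) is a polynomial identity modulo
   (sqrt 3)^2 = 3.  The angle bound at A makes the flank counterclockwise, since
   4 area (F_a) = 2 Delta + sqrt 3 <B - A, C - A> = 2 m n sin (A + 60 deg);
   the flanks at B and C are the flank at A of the rotated triangles. *)

Lemma same_point_sym p q : same_point p q -> same_point q p.
Proof.
  intros [k [Hk [E1 E2]]]. exists (/ k). split; [now apply Rinv_neq_0_compat|].
  rewrite E1, E2. split; [|field; exact Hk].
  rewrite Cmult_assoc, <- RtoC_mult, Rinv_l by exact Hk. now rewrite Cmult_1_l.
Qed.

Lemma same_point_trans p q r : same_point p q -> same_point q r -> same_point p r.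
Proof.
  intros [k [Hk [E1 F1]]] [l [Hl [E2 F2]]]. exists (k * l).
  split; [now apply Rmult_integral_contrapositive|].
  rewrite E1, F1, E2, F2, RtoC_mult. split; ring.
Qed.

Lemma same_point_rescale V1 V2 V3 w1 w2 w3 k : k <> 0 ->
  same_point (bary_hom V1 V2 V3 (w1 / k) (w2 / k) (w3 / k)) (bary_hom V1 V2 V3 w1 w2 w3).
Proof.
  intro Hk. exists (/ k). split; [now apply Rinv_neq_0_compat|].
  unfold bary_hom, Rdiv; simpl. rewrite !RtoC_mult. split; ring.
Qed.

Lemma same_point_translate A V1 V2 V3 W1 W2 W3 v1 v2 v3 w1 w2 w3 :
  same_point (bary_hom V1 V2 V3 v1 v2 v3) (bary_hom W1 W2 W3 w1 w2 w3) ->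
  same_point (bary_hom (A + V1) (A + V2) (A + V3) v1 v2 v3)
             (bary_hom (A + W1) (A + W2) (A + W3) w1 w2 w3).
Proof.
  intros [k [Hk [E1 E2]]]. exists k. split; [exact Hk|].
  unfold bary_hom in *; simpl in *. split; [|exact E2].
  transitivity (RtoC (v1 + v2 + v3) * A + ((v1 * V1 + v2 * V2) + v3 * V3))%C.
  { rewrite !RtoC_plus. ring. }
  rewrite E1, E2, !RtoC_mult, !RtoC_plus. ring.
Qed.

Lemma bary_hom_rotate V1 V2 V3 w1 w2 w3 :
  bary_hom V2 V3 V1 w2 w3 w1 = bary_hom V1 V2 V3 w1 w2 w3.
Proof. unfold bary_hom. f_equal; ring. Qed.

Lemma X16_hom_rotate V1 V2 V3 : X16_hom V2 V3 V1 = X16_hom V1 V2 V3.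
Proof. apply bary_hom_rotate. Qed.

Lemma rho_coords : rho = (-1/2, sqrt 3 / 2).
Proof.
  unfold rho. replace (2 * PI / 3) with (PI - PI / 3) by field.
  rewrite Rtrigo_facts.cos_pi_minus, Rtrigo_facts.sin_pi_minus, cos_PI3, sin_PI3.
  f_equal; field.
Qed.

Lemma Cinv_rho_coords : Cinv rho = (-1/2, - (sqrt 3 / 2)).
Proof.
  rewrite rho_coords. unfold Cinv; simpl.
  assert (H3 := sqrt_sqrt 3 ltac:(lra)).
  replace (-1/2 * (-1/2 * 1) + sqrt 3 / 2 * (sqrt 3 / 2 * 1)) with 1 by nra.
  f_equal; field.
Qed.

Definition sqnorm (u : C) : R := fst u * fst u + snd u * snd u.

Lemma Cmod_mul_self u : Cmod u * Cmod u = sqnorm u.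
Proof. unfold Cmod, sqnorm. rewrite sqrt_sqrt; [ring | nra]. Qed.

Lemma Cmod_Cminus_sym P Q : Cmod (Cminus P Q) = Cmod (Cminus Q P).
Proof. destruct P, Q; unfold Cmod; simpl; f_equal; ring. Qed.

Lemma dot_cross_sq u v :
  dotC u v * dotC u v + crossC u v * crossC u v = sqnorm u * sqnorm v.
Proof. destruct u, v; unfold dotC, crossC, sqnorm; simpl; ring. Qed.

Lemma crossC_neq0_Cmod_pos u v : crossC u v <> 0 -> Cmod u > 0 /\ Cmod v > 0.
Proof.
  intro H. destruct u as [a b], v as [c d]. unfold crossC in H; simpl in H.
  split; apply Cmod_gt_0; intro E; injection E as E1 E2; subst; apply H; ring.
Qed.

Definition area2 (V1 V2 V3 : C) : R := crossC (Cminus V2 V1) (Cminus V3 V1).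

Lemma area2_rotate V1 V2 V3 : area2 V2 V3 V1 = area2 V1 V2 V3.
Proof. destruct V1, V2, V3; unfold area2, crossC; simpl; ring. Qed.

Lemma area2_translate A V1 V2 V3 : area2 (A + V1) (A + V2) (A + V3) = area2 V1 V2 V3.
Proof. destruct A, V1, V2, V3; unfold area2, crossC; simpl; ring. Qed.

Lemma area2_pos_Cmod_pos V P Q : area2 V P Q > 0 ->
  Cmod (Cminus P V) > 0 /\ Cmod (Cminus Q V) > 0.
Proof. intro H. apply crossC_neq0_Cmod_pos. unfold area2 in H. lra. Qed.

Lemma cos_sin_acos x y : x * x + y * y = 1 -> 0 <= y ->
  cos (acos x) = x /\ sin (acos x) = y.
Proof.
  intros Hxy Hy. assert (Hx : -1 <= x <= 1) by (split; nra).
  split; [now apply cos_acos|].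
  rewrite sin_acos by exact Hx.
  replace (1 - x²) with (y²) by (unfold Rsqr; lra). now apply sqrt_Rsqr.
Qed.

Lemma cos_sin_angle_at V P Q : area2 V P Q > 0 ->
  let mn := Cmod (Cminus P V) * Cmod (Cminus Q V) in
  cos (angle_at V P Q) = dotC (Cminus P V) (Cminus Q V) / mn /\
  sin (angle_at V P Q) = area2 V P Q / mn.
Proof.
  intros H mn. unfold angle_at. fold mn.
  destruct (area2_pos_Cmod_pos V P Q H) as [Hm Hn].
  assert (Hmn : mn > 0) by (unfold mn; nra).
  apply cos_sin_acos.
  - assert (L := dot_cross_sq (Cminus P V) (Cminus Q V)).
    rewrite <- !Cmod_mul_self in L. unfold area2.
    replace (_ * _ + _ * _) with
      ((dotC (Cminus P V) (Cminus Q V) * dotC (Cminus P V) (Cminus Q V)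
        + crossC (Cminus P V) (Cminus Q V) * crossC (Cminus P V) (Cminus Q V)) / (mn * mn))
      by (field; lra).
    rewrite L. unfold mn. field. lra.
  - apply Rlt_le, Rdiv_lt_0_compat; lra.
Qed.

Lemma area2_add_dot_pos V P Q : area2 V P Q > 0 -> angle_at V P Q < 2 * PI / 3 ->
  area2 V P Q + sqrt 3 * dotC (Cminus P V) (Cminus Q V) > 0.
Proof.
  intros H Hang.
  destruct (cos_sin_angle_at V P Q H) as [Hcos Hsin].
  destruct (area2_pos_Cmod_pos V P Q H) as [Hm Hn].
  set (mn := Cmod (Cminus P V) * Cmod (Cminus Q V)) in *.
  set (theta := angle_at V P Q) in *.
  assert (Hmn : mn > 0) by (unfold mn; nra).
  (* sin theta + sqrt 3 cos theta = 2 sin (theta + pi/3) *)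
  replace (area2 V P Q + sqrt 3 * dotC (Cminus P V) (Cminus Q V))
    with (2 * mn * sin (theta + PI / 3)).
  2: { rewrite sin_plus, Hcos, Hsin, cos_PI3, sin_PI3. field. lra. }
  assert (Hth : 0 <= theta) by apply acos_bound.
  assert (Hpi := PI_RGT_0).
  apply Rmult_lt_0_compat; [lra|]. apply sin_gt_0; lra.
Qed.

Definition side_prod (V1 V2 V3 : C) : R :=
  Cmod (Cminus V3 V2) * Cmod (Cminus V1 V3) * Cmod (Cminus V2 V1).

Lemma side_prod_pos V1 V2 V3 : area2 V1 V2 V3 > 0 -> side_prod V1 V2 V3 > 0.
Proof.
  intro H.
  destruct (area2_pos_Cmod_pos V1 V2 V3 H) as [H2 H3].
  rewrite <- area2_rotate in H.
  destruct (area2_pos_Cmod_pos V2 V3 V1 H) as [H1 _].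
  unfold side_prod. rewrite (Cmod_Cminus_sym V1 V3).
  repeat apply Rmult_lt_0_compat; lra.
Qed.

(* The parameter [c] stands for sin 60 deg = sqrt 3 / 2; keeping it a variable
   subject to [c * c = 3 / 4] makes the flank identities below polynomial. *)
Definition iso_weight (c : R) (V1 V2 V3 : C) : R :=
  sqnorm (Cminus V3 V2) * (area2 V1 V2 V3 - 2 * c * dotC (Cminus V2 V1) (Cminus V3 V1)).

Definition iso_hom (c : R) (V1 V2 V3 : C) : C * R :=
  bary_hom V1 V2 V3 (iso_weight c V1 V2 V3) (iso_weight c V2 V3 V1) (iso_weight c V3 V1 V2).

Lemma X16_weight V1 V2 V3 : area2 V1 V2 V3 > 0 ->
  Cmod (Cminus V3 V2) * sin (angle_at V1 V2 V3 - PI / 3)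
  = iso_weight (sqrt 3 / 2) V1 V2 V3 / (2 * side_prod V1 V2 V3).
Proof.
  intro H.
  destruct (cos_sin_angle_at V1 V2 V3 H) as [Hcos Hsin].
  destruct (area2_pos_Cmod_pos V1 V2 V3 H) as [H2 H3].
  rewrite <- area2_rotate in H.
  destruct (area2_pos_Cmod_pos V2 V3 V1 H) as [H1 _].
  rewrite sin_minus, Hcos, Hsin, cos_PI3, sin_PI3.
  unfold iso_weight, side_prod. rewrite <- Cmod_mul_self, (Cmod_Cminus_sym V1 V3).
  field. lra.
Qed.

Lemma X16_hom_same_iso_hom V1 V2 V3 : area2 V1 V2 V3 > 0 ->
  same_point (X16_hom V1 V2 V3) (iso_hom (sqrt 3 / 2) V1 V2 V3).
Proof.
  intro H1.
  assert (H2 : area2 V2 V3 V1 > 0) by (rewrite area2_rotate; exact H1).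
  assert (H3 : area2 V3 V1 V2 > 0) by (rewrite area2_rotate; exact H2).
  unfold X16_hom. cbv zeta.
  rewrite (X16_weight V1 V2 V3 H1), (X16_weight V2 V3 V1 H2), (X16_weight V3 V1 V2 H3).
  replace (side_prod V2 V3 V1) with (side_prod V1 V2 V3) by (unfold side_prod; ring).
  replace (side_prod V3 V1 V2) with (side_prod V1 V2 V3) by (unfold side_prod; ring).
  apply same_point_rescale.
  assert (Hs := side_prod_pos V1 V2 V3 H1). lra.
Qed.

Lemma iso_weight_translate c A V1 V2 V3 :
  iso_weight c (A + V1) (A + V2) (A + V3) = iso_weight c V1 V2 V3.
Proof. destruct A, V1, V2, V3; unfold iso_weight, area2, sqnorm, dotC, crossC; simpl; ring. Qed.

Lemma same_iso_hom_translate c A V1 V2 V3 W1 W2 W3 :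
  same_point (iso_hom c V1 V2 V3) (iso_hom c W1 W2 W3) ->
  same_point (iso_hom c (A + V1) (A + V2) (A + V3)) (iso_hom c (A + W1) (A + W2) (A + W3)).
Proof. unfold iso_hom. rewrite !iso_weight_translate. apply same_point_translate. Qed.

Lemma pow_reduce_sin60 c k : c * c = 3 / 4 -> c ^ S (S k) = 3 / 4 * c ^ k.
Proof. intro Hc. simpl. rewrite <- Hc. ring. Qed.

Ltac reduce_sin60 Hc := ring_simplify; repeat rewrite (pow_reduce_sin60 _ _ Hc); field.

Lemma Rmult_eq_div_l a b x y : a <> 0 -> a * x = b * y -> x = b / a * y.
Proof. intros Ha E. apply Rmult_eq_reg_l with a; [rewrite E; field|]; exact Ha. Qed.

(* [Cmult (-1/2, c)] and [Cmult (-1/2, -c)] are the multiplications by rho and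
   by its inverse. *)
Lemma iso_hom_flank_origin c u v : c * c = 3 / 4 ->
  area2 0 u v <> 0 -> area2 0 (Cmult (-1/2, c) v) (Cmult (-1/2, -c) u) <> 0 ->
  same_point (iso_hom c 0 (Cmult (-1/2, c) v) (Cmult (-1/2, -c) u)) (iso_hom c 0 u v).
Proof.
  intros Hc HT HF.
  exists (area2 0 (Cmult (-1/2, c) v) (Cmult (-1/2, -c) u) / area2 0 u v).
  split; [unfold Rdiv; now apply Rmult_integral_contrapositive, conj, Rinv_neq_0_compat|].
  destruct u as [u1 u2], v as [v1 v2].
  unfold iso_hom, bary_hom, iso_weight, area2, sqnorm, dotC, crossC in *. simpl in *.
  split; [apply injective_projections; simpl|].
  all: rewrite ?Rmult_0_l, ?Rminus_0_r, ?Rplus_0_r;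
    apply Rmult_eq_div_l; [exact HT | reduce_sin60 Hc].
Qed.

Lemma Cplus_Cminus_cancel (A B : C) : Cplus A (Cminus B A) = B.
Proof. ring. Qed.

Lemma area2_flank c A u v : c * c = 3 / 4 ->
  2 * area2 A (Cplus A (Cmult (-1/2, c) v)) (Cplus A (Cmult (-1/2, -c) u))
  = area2 A (A + u) (A + v) + 2 * c * dotC u v.
Proof. intro Hc. destruct A, u, v; unfold area2, dotC, crossC; simpl. reduce_sin60 Hc. Qed.

Lemma iso_hom_flank c A u v : c * c = 3 / 4 ->
  area2 A (A + u) (A + v) <> 0 ->
  area2 A (Cplus A (Cmult (-1/2, c) v)) (Cplus A (Cmult (-1/2, -c) u)) <> 0 ->
  same_point (iso_hom c A (Cplus A (Cmult (-1/2, c) v)) (Cplus A (Cmult (-1/2, -c) u)))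
             (iso_hom c A (A + u) (A + v)).
Proof.
  intros Hc HT HF.
  rewrite <- (Cplus_0_r A) in HT at 1. rewrite <- (Cplus_0_r A) in HF at 1.
  rewrite area2_translate in HT, HF.
  assert (H := same_iso_hom_translate c A _ _ _ _ _ _ (iso_hom_flank_origin c u v Hc HT HF)).
  now rewrite Cplus_0_r in H.
Qed.

Lemma X16_flank_a A B C0 : area2 A B C0 > 0 -> angle_at A B C0 < 2 * PI / 3 ->
  same_point (X16_tri (flank_a A B C0)) (X16_hom A B C0).
Proof.
  intros HT Hang.
  set (c := sqrt 3 / 2).
  assert (Hc : c * c = 3 / 4) by (unfold c; rewrite <- (sqrt_sqrt 3) at 3; lra).
  assert (HF : area2 A (Cplus A (Cmult (-1/2, c) (Cminus C0 A)))
                       (Cplus A (Cmult (-1/2, -c) (Cminus B A))) > 0).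
  { assert (E := area2_flank c A (Cminus B A) (Cminus C0 A) Hc).
    rewrite !Cplus_Cminus_cancel in E.
    assert (Hpos := area2_add_dot_pos A B C0 HT Hang).
    replace (2 * c) with (sqrt 3) in E by (unfold c; field). lra. }
  unfold flank_a. rewrite Cinv_rho_coords, rho_coords. fold c. simpl X16_tri.
  eapply same_point_trans; [now apply X16_hom_same_iso_hom|].
  eapply same_point_trans; [|apply same_point_sym; now apply X16_hom_same_iso_hom].
  assert (H := iso_hom_flank c A (Cminus B A) (Cminus C0 A) Hc).
  rewrite !Cplus_Cminus_cancel in H. apply H; lra.
Qed.

Theorem mainTheorem2 (A B C0 : C) :
  ccw A B C0 ->
  angle_at A B C0 < 2 * PI / 3 ->
  angle_at B C0 A < 2 * PI / 3 ->
  angle_at C0 A B < 2 * PI / 3 ->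
  same_point (X16_tri (flank_a A B C0)) (X16_hom A B C0) /\
  same_point (X16_tri (flank_b A B C0)) (X16_hom A B C0) /\
  same_point (X16_tri (flank_c A B C0)) (X16_hom A B C0).
Proof.
  intros HT HA HB HC.
  assert (HT' : area2 B C0 A > 0) by (rewrite area2_rotate; exact HT).
  assert (HT'' : area2 C0 A B > 0) by (rewrite area2_rotate; exact HT').
  split; [|split].
  - exact (X16_flank_a A B C0 HT HA).
  - rewrite <- X16_hom_rotate. exact (X16_flank_a B C0 A HT' HB).
  - rewrite <- 2!X16_hom_rotate. exact (X16_flank_a C0 A B HT'' HC).
Qed.
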